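(* For the information exchange $\mathcal{E}$, failure model $SO_t$ and decision protocol $P'$ described in the context, $P'$ is an SBA protocol with respect to $\mathcal{E}$ and $SO_t$, i.e., in every run $r$ of $\mathcal{I}_{P',\mathcal{E},SO_t}$: (Unique-Decision) each agent performs an action $\mathtt{decide}_i(v)$ at most once; (Simultaneous-Agreement) if a nonfaulty agent $i$ performs $\mathtt{decide}_i(v)$ at time $m$ then every nonfaulty agent $j$ performs $\mathtt{decide}_j(v)$ at time $m$; (Validity) if a nonfaulty agent performs $\mathtt{decide}_i(v)$ then some agent has initial value $v$ in $r$.
   Context: Agents $\mathrm{Agt}=\{1,\dots,n\}$, a bound $t\le n$, decision values $V=\{0,1\}$, actions $A_i=\{\mathtt{noop},\mathtt{decide}_i(0),\mathtt{decide}_i(1)\}$. Information exchange $\mathcal{E}$: agent $i$'s local states are tuples $\langle\mathit{init}_i,\mathit{known}_i,\mathit{new}_i,\mathit{kfaulty}_i,\mathit{done}_i,\mathit{time}_i\rangle$ with $\mathit{init}_i\in\{0,1\}$, $\mathit{known}_i,\mathit{new}_i\subseteq\{0,1\}$, $\mathit{kfaulty}_i\subseteq\mathrm{Agt}$, $\mathit{done}_i\in\{0,1\}$, $\mathit{time}_i\in\mathbb{N}$; initial states have $\mathit{known}_i=\mathit{new}_i=\{\mathit{init}_i\}$, $\mathit{kfaulty}_i=\emptyset$, $\mathit{done}_i=\mathit{time}_i=0$. Messages are $\bot$ or pairs $\langle N,F\rangle$ with $N\subseteq\{0,1\}$, $F\subseteq\mathrm{Agt}$. In each round agent $i$ sends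 the same message to every agent $j\in\mathrm{Agt}$ (including itself): $\langle\emptyset,\emptyset\rangle$ if $\mathit{done}_i=1$ or its action is a $\mathtt{decide}$ action, and $\langle\mathit{new}_i,\mathit{kfaulty}_i\rangle$ otherwise. Update after action $a$ and receiving messages, where $J$ is the set of agents from which a (non-$\bot$) message $\langle N_j,F_j\rangle$ is received: $\mathit{init}$ unchanged; $\mathit{known}'_i=\mathit{known}_i\cup\bigcup_{j\in J}N_j$; $\mathit{new}'_i=\mathit{known}'_i\setminus\mathit{known}_i$; $\mathit{kfaulty}'_i=\mathit{kfaulty}_i\cup(\mathrm{Agt}\setminus J)\cup\bigcup_{j\in J}F_j$; $\mathit{done}'_i=1$ if $a$ is a $\mathtt{decide}$ action, else $\mathit{done}_i$; $\mathit{time}'_i=\mathit{time}_i+1$. Decision protocol $P'$: $P'_i(s)=\mathtt{decide}_i(v)$ if $\mathit{done}_i=0$, $v$ is the least element of $\mathit{known}_i$, and either $\mathit{time}_i=t+1$ or $\mathit{kfaulty}_i=\mathrm{Agt}\setminus\{i\}$; otherwise $P'_i(s)=\mathtt{noop}$. Failure model $SO_t$ (sending omissions): in each run there is a set of at most $t$ agents, and the only failures are that in any round, some messages sent by these agents (to any recipients, possibly themselves) may be lost (received as $\bot$); all other messages are delivered and local states evolve without perturbation. Runs of $\mathcal{I}_{P',\mathcal{E},SO_t}$ start from any combination of initial states and any such failure pattern; at each time $k$ each agent $i$ performs $P'_i$ of its current state, sends its messages, and updates its state from the messages it receives in round $k+1$. An agent is nonfaulty in a run if none of its messages is ever lost.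 *)

From mathcomp Require Import all_boot.
Set Implicit Arguments. Unset Strict Implicit. Unset Printing Implicit Defensive.

(* Decision values V = {0,1} are encoded as bool: 0 = false, 1 = true. *)
Definition V := bool.

Definition leastV (K : {set V}) : V := if false \in K then false else true.

Section Model.
Variable n : nat.
Notation Agt := 'I_n.

Record lstate := LState {
  init_ : V;
  known_ : {set V};
  new_ : {set V};
  kfaulty_ : {set Agt};
  done_ : bool;
  time_ : nat }.

(* actions noop / decide_i(v) (agent index implicit: the agent acting) *)
Inductive action := Noop | Decide of V.

(* messages: None = bot (lost), Some (N, F) = <N, F> *)
Definition msg := option ({set V} * {set Agt}).

Definition init_state (v : V) : lstate :=
  LState v [set v] [set v] set0 false 0.

Definition Pprime (t : nat) (i : Agt) (s : lstate) : action :=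
  if ~~ done_ s && ((time_ s == t.+1) || (kfaulty_ s == [set j | j != i]))
  then Decide (leastV (known_ s)) else Noop.

Definition send (s : lstate) (a : action) : {set V} * {set Agt} :=
  if done_ s then (set0, set0)
  else if a is Decide _ then (set0, set0) else (new_ s, kfaulty_ s).

Definition msgN (m : msg) : {set V} := if m is Some p then p.1 else set0.
Definition msgF (m : msg) : {set Agt} := if m is Some p then p.2 else set0.

Definition update (s : lstate) (a : action) (rcv : Agt -> msg) : lstate :=
  let known' := known_ s :|: \bigcup_(j : Agt) msgN (rcv j) in
  LState (init_ s)
         known'
         (known' :\: known_ s)
         (kfaulty_ s :|: [set j | rcv j == None] :|: \bigcup_(j : Agt) msgF (rcv j))
         (if a is Decide _ then true else done_ s)
         (time_ s).+1.

(* A run is determined by the initial values and the failure pattern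
   lost k j i = "the message sent by j to i in round k+1 is lost". *)
Variables (t : nat) (init : Agt -> V) (lost : nat -> Agt -> Agt -> bool).

Fixpoint state (k : nat) : Agt -> lstate :=
  match k with
  | 0 => fun i => init_state (init i)
  | k'.+1 => fun i =>
      let st := state k' in
      update (st i) (Pprime t i (st i))
        (fun j => if lost k' j i then None
                  else Some (send (st j) (Pprime t j (st j))))
  end.

Definition act (k : nat) (i : Agt) : action := Pprime t i (state k i).

Definition nonfaulty (i : Agt) : Prop := forall k j, lost k i j = false.

Definition unique_decision : Prop :=
  forall i m1 m2 v1 v2, act m1 i = Decide v1 -> act m2 i = Decide v2 -> m1 = m2.

Definition simultaneous_agreement : Prop :=
  forall i j m v, nonfaulty i -> nonfaulty j ->
    act m i = Decide v -> act m j = Decide v.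

Definition validity : Prop :=
  forall i m v, nonfaulty i -> act m i = Decide v -> exists j, init j = v.

End Model.

Definition SO_pattern (n t : nat) (lost : nat -> 'I_n -> 'I_n -> bool) : Prop :=
  exists Fa : {set 'I_n}, #|Fa| <= t /\ (forall k i j, lost k i j -> i \in Fa).

(* Two nonfaulty agents never suspect each other, so neither can take the early
   decision: both stay undecided and relay what they learn until time t+1, when
   each decides the least value it knows.  They know the same values then.  A
   value that a nonfaulty agent learns by time t is relayed to everybody in the
   next round; so if a value reaches a nonfaulty agent only in round t+1 while
   another nonfaulty agent misses it, it travelled along a chain of t+1 distinct
   agents that all knew it at time t, and all of them must be faulty, which is
   more than t faulty agents.  Validity holds because every known value is an
   initial value, and unique decision because [done_] stays set. *)

From mathcomp Require Import all_boot.
Set Implicit Arguments. Unset Strict Implicit. Unset Printing Implicit Defensive.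

Section Run.
Variables (n t : nat) (init : 'I_n -> V) (lost : nat -> 'I_n -> 'I_n -> bool).
Notation st k i := (state t init lost k i).
Notation ac k i := (act t init lost k i).

Definition received (k : nat) (i j : 'I_n) : msg n :=
  if lost k j i then None else Some (send (st k j) (Pprime t j (st k j))).

Lemma state_succ k i : st k.+1 i = update (st k i) (ac k i) (received k i).
Proof. by []. Qed.

Lemma time_state k i : time_ (st k i) = k.
Proof. by elim: k i => [|k IH] i //=; rewrite IH. Qed.

Lemma done_succ k i :
  done_ (st k.+1 i) = if ac k i is Decide _ then true else done_ (st k i).
Proof. by []. Qed.

Lemma done_mono i k k' : k <= k' -> done_ (st k i) -> done_ (st k' i).
Proof.
apply: (@homo_leq _ (fun k => done_ (st k i)) (fun b b' : bool => b -> b')) => //.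
  by move=> b2 b1 b3 imp12 imp23 /imp12 /imp23.
by move=> l; rewrite done_succ; case: (ac l i).
Qed.

Lemma act_Decide k i v : ac k i = Decide v ->
  [/\ ~~ done_ (st k i), v = leastV (known_ (st k i)) &
      (k == t.+1) || (kfaulty_ (st k i) == [set j | j != i])].
Proof.
rewrite /act /Pprime time_state.
by case: (done_ (st k i)) => //=; case: ifP => // ? [<-].
Qed.

Lemma act_last_round i :
  ~~ done_ (st t.+1 i) -> ac t.+1 i = Decide (leastV (known_ (st t.+1 i))).
Proof. by rewrite /act /Pprime time_state eqxx => ->. Qed.

Lemma Pprime_unique_decision : unique_decision t init lost.
Proof.
suff earlier i m1 m2 v1 v2 : m1 < m2 -> ac m1 i = Decide v1 -> ac m2 i <> Decide v2.
  move=> i m1 m2 v1 v2 dec1 dec2; case: (ltngtP m1 m2) => [lt12|lt21|//].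
  - by case: (earlier i m1 m2 v1 v2 lt12 dec1).
  - by case: (earlier i m2 m1 v2 v1 lt21 dec2).
move=> lt12 dec1 /act_Decide [undone2 _ _].
have done1 : done_ (st m1.+1 i) by rewrite done_succ dec1.
by rewrite (done_mono lt12 done1) in undone2.
Qed.

Lemma new_sub_known k i : new_ (st k i) \subset known_ (st k i).
Proof. by case: k => [|k] //=; apply: subsetDl. Qed.

Lemma known_succE k i : known_ (st k.+1 i) = known_ (st k i) :|: new_ (st k.+1 i).
Proof. by apply/setP => x; rewrite state_succ !inE; case: (x \in _). Qed.

Lemma known_mono i k k' : k <= k' -> known_ (st k i) \subset known_ (st k' i).
Proof.
apply: (@homo_leq _ (fun k => known_ (st k i)) (fun A B => A \subset B)).
- exact: subxx.
- by move=> B A C; apply: subset_trans.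
- by move=> l; rewrite known_succE subsetUl.
Qed.

Lemma init_known k i : init i \in known_ (st k i).
Proof. by apply: subsetP (known_mono i (leq0n k)) _ _; rewrite inE. Qed.

Lemma new_succ_received k i v :
  v \in new_ (st k.+1 i) -> exists j, v \in new_ (st k j).
Proof.
rewrite state_succ /= inE => /andP [fresh /setUP [old|]]; first by rewrite old in fresh.
case/bigcupP=> j _; rewrite /received; case: (lost k j i); first by rewrite inE.
rewrite /send /=; case: (done_ _); first by rewrite inE.
by case: (Pprime _ _ _) => [|_] /=; [exists j | rewrite inE].
Qed.

Lemma new_delivered k i j :
  ~~ lost k j i -> ~~ done_ (st k j) -> ac k j = Noop ->
  new_ (st k j) \subset known_ (st k.+1 i).
Proof.
move=> delivered undone noop; apply/subsetP => v v_new.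
rewrite state_succ inE; apply/orP; right; apply/bigcupP; exists j => //.
by rewrite /received (negbTE delivered) /send (negbTE undone) -/(act _ _ _ k j) noop.
Qed.

Lemma first_new k i v : v \in known_ (st k i) -> exists2 l, l <= k & v \in new_ (st l i).
Proof.
elim: k => [|k IH]; first by exists 0.
rewrite known_succE => /setUP [/IH [l le_lk v_new]|]; last by exists k.+1.
by exists l => //; apply: leqW.
Qed.

Lemma known_init_value k i v : v \in known_ (st k i) -> exists j, init j = v.
Proof.
elim: k i v => [|k IH] i v; first by rewrite inE => /eqP ->; exists i.
rewrite known_succE => /setUP [/IH //|/new_succ_received [j v_new]].
exact: IH (subsetP (new_sub_known k j) _ v_new).
Qed.

Definition knowers k v := [set g | v \in known_ (st k g)].

Lemma in_knowers k v g : (g \in knowers k v) = (v \in known_ (st k g)).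
Proof. by rewrite inE. Qed.

(* A value first learnt at time [l] has passed through a chain of [l+1]
   distinct agents, each learning it one round later than the previous one. *)
Lemma card_knowers l i v : v \in new_ (st l i) -> l < #|knowers l v|.
Proof.
elim: l i => [|l IH] i v_new.
  by apply/card_gt0P; exists i; rewrite in_knowers (subsetP (new_sub_known 0 i)).
have [j /IH lt_l] := new_succ_received v_new.
apply: leq_ltn_trans lt_l (proper_card _); apply/properP; split.
  by apply/subsetP => g; rewrite !in_knowers; apply: (subsetP (known_mono g (leqnSn l))).
exists i; rewrite in_knowers; first exact: subsetP (new_sub_known _ i) _ v_new.
by move: v_new; rewrite state_succ inE => /andP [].
Qed.

Lemma leastV_mem (K : {set V}) v : v \in K -> leastV K \in K.
Proof. by rewrite /leastV; case: ifP => // false_notin; case: v => //; rewrite false_notin. Qed.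

Lemma Pprime_validity : validity t init lost.
Proof.
move=> i m v _ /act_Decide [_ -> _].
exact: known_init_value (leastV_mem (init_known m i)).
Qed.

Lemma kfaulty_lost k i j : j \in kfaulty_ (st k i) -> exists k' l, lost k' j l.
Proof.
elim: k i => [|k IH] i; first by rewrite inE.
rewrite state_succ /= => /setUP [/setUP [/IH //|]|].
  by rewrite inE /received; case lost_kji: (lost k j i) => // _; exists k, i.
case/bigcupP=> l _; rewrite /received; case: (lost k l i); first by rewrite inE.
rewrite /send /=; case: (done_ _); first by rewrite inE.
by case: (Pprime _ _ _) => [|_] /=; [apply: IH | rewrite inE].
Qed.

Lemma nonfaulty_notin_kfaulty k i j : nonfaulty lost j -> j \notin kfaulty_ (st k i).
Proof. by move=> nf_j; apply/negP => /kfaulty_lost [k' [l]]; rewrite nf_j. Qed.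

Section OtherNonfaulty.
Variables (i j : 'I_n).
Hypotheses (nf_j : nonfaulty lost j) (neq_ij : i != j).

(* [j] never enters [kfaulty_ (st k i)], so the early-decision trigger of [Pprime] never fires. *)
Lemma act_Decide_at_last_round k v : ac k i = Decide v -> k = t.+1.
Proof.
case/act_Decide=> _ _ /orP [/eqP //|/eqP all_faulty].
by have := nonfaulty_notin_kfaulty k i nf_j; rewrite all_faulty inE eq_sym neq_ij.
Qed.

Lemma undecided_before_last_round k : k <= t -> ~~ done_ (st k i) /\ ac k i = Noop.
Proof.
have noop l : l <= t -> ac l i = Noop.
  by case dec: (ac l i) => [//|v]; rewrite (act_Decide_at_last_round dec) ltnn.
move=> le_kt; split; last exact: noop.
by elim: k le_kt => [//|k IH] lt_kt; rewrite done_succ noop ?IH // ltnW.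
Qed.

End OtherNonfaulty.

Lemma nonfaulty_known_spreads g j v : nonfaulty lost g -> nonfaulty lost j ->
  v \in known_ (st t g) -> v \in known_ (st t.+1 j).
Proof.
move=> nf_g nf_j v_known; have [<-|neq_gj] := eqVneq g j.
  exact: subsetP (known_mono g (leqnSn t)) _ v_known.
have [l le_lt v_new] := first_new v_known.
have [undone noop] := undecided_before_last_round nf_j neq_gj le_lt.
apply: subsetP (known_mono j (le_lt : l.+1 <= t.+1)) _ _.
by apply: subsetP (new_delivered (negbT (nf_g l j)) undone noop) _ v_new.
Qed.

Section Agreement.
Variable faulty : {set 'I_n}.
Hypotheses (card_faulty : #|faulty| <= t)
           (lost_faulty : forall k i j, lost k i j -> i \in faulty).

Lemma nonfaulty_known_last i j v : nonfaulty lost i -> nonfaulty lost j ->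
  v \in known_ (st t.+1 i) -> v \in known_ (st t.+1 j).
Proof.
move=> nf_i nf_j; rewrite known_succE => /setUP [|v_new].
  exact: nonfaulty_known_spreads.
apply/contraT => v_unknown.
have [g /card_knowers many_knowers] := new_succ_received v_new.
suff /subset_leq_card le_faulty : knowers t v \subset faulty.
  by rewrite ltnNge (leq_trans le_faulty card_faulty) in many_knowers.
apply/subsetP => h; rewrite in_knowers => h_knows; apply/contraT => h_ok.
have nf_h : nonfaulty lost h by move=> k l; apply/contraNF: h_ok; apply: lost_faulty.
by rewrite (nonfaulty_known_spreads nf_h nf_j h_knows) in v_unknown.
Qed.

Lemma Pprime_simultaneous_agreement : simultaneous_agreement t init lost.
Proof.
move=> i j m v nf_i nf_j dec_i; have [<-//|neq_ij] := eqVneq i j.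
have last_m := act_Decide_at_last_round nf_j neq_ij dec_i; subst m.
have [_ -> _] := act_Decide dec_i.
have neq_ji : j != i by rewrite eq_sym.
have [undone noop] := undecided_before_last_round nf_i neq_ji (leqnn t).
have -> : known_ (st t.+1 i) = known_ (st t.+1 j).
  by apply/setP => x; apply/idP/idP; apply: nonfaulty_known_last.
by apply: act_last_round; rewrite done_succ noop.
Qed.

End Agreement.
End Run.

Theorem proposition17 (n t : nat) (ht : t <= n)
    (init : 'I_n -> V) (lost : nat -> 'I_n -> 'I_n -> bool)
    (hSO : SO_pattern t lost) :
  unique_decision t init lost /\
  simultaneous_agreement t init lost /\
  validity t init lost.
Proof.
have [faulty [card_faulty lost_faulty]] := hSO.
split; first exact: Pprime_unique_decision.
split; last exact: Pprime_validity.
exact: Pprime_simultaneous_agreement card_faulty lost_faulty.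
Qed.
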